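(* Let $K$ be a perfect $A$-field, let $0\to M_1\to M\to M_2\to0$ be an exact sequence of dual $\mathbf t$-motives over $K$, and let $N$ be a dual $\mathbf t$-motive. Then: (i) there is an exact sequence of $\mathbb F_q[t]$-modules $$0\to\operatorname{Hom}_{\mathcal M_t^\vee}(N,M_1)\to\operatorname{Hom}_{\mathcal M_t^\vee}(N,M)\to\operatorname{Hom}_{\mathcal M_t^\vee}(N,M_2)\to\operatorname{Ext}^1_{\mathcal M_t^\vee}(N,M_1)\to\operatorname{Ext}^1_{\mathcal M_t^\vee}(N,M)\to\operatorname{Ext}^1_{\mathcal M_t^\vee}(N,M_2)\to0;$$ (ii) there is an exact sequence of $\mathbb F_q[t]$-modules $$0\to\operatorname{Hom}_{\mathcal M_t^\vee}(M_2,N)\to\operatorname{Hom}_{\mathcal M_t^\vee}(M,N)\to\operatorname{Hom}_{\mathcal M_t^\vee}(M_1,N)\to\operatorname{Ext}^1_{\mathcal M_t^\vee}(M_2,N)\to\operatorname{Ext}^1_{\mathcal M_t^\vee}(M,N)\to\operatorname{Ext}^1_{\mathcal M_t^\vee}(M_1,N)\to0.$$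
   Context: $A=\mathbb F_q[t]$; $K$ a perfect field of characteristic $p$ with $\mathbb F_q$-algebra map $\iota:A\to K$, $\theta=\iota(t)$. $K\{\sigma\}$: twisted polynomials with $\sigma x=x^{q^{-1}}\sigma$. $K[t,\sigma]$ is the ring generated by $K$, $t$, $\sigma$ with $tc=ct$, $t\sigma=\sigma t$, $\sigma c=c^{q^{-1}}\sigma$ ($c\in K$). A dual $\mathbf t$-motive is a left $K[t,\sigma]$-module that is free and finitely generated over $K\{\sigma\}$ and such that $(t-\theta)^l(H/\sigma H)=0$ for some $l\in\mathbb N$; morphisms are $K[t,\sigma]$-module homomorphisms, and $\operatorname{Hom}_{\mathcal M_t^\vee}$ denotes the $\mathbb F_q[t]$-module of morphisms. A sequence of dual $\mathbf t$-motives is exact if it is exact as a sequence of $\mathbb F_q[t]$-modules. $\operatorname{Ext}^1_{\mathcal M_t^\vee}(M_2,M_1)$ is the set of (equivalence classes of) short exact sequences $0\to M_1\to M\to M_2\to0$ of dual $\mathbf t$-motives, an $\mathbb F_q[t]$-module under Baer sum with multiplication by $a$ given by pushout along multiplication by $a$ on $M_1$. *)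

From HB Require Import structures.
From mathcomp Require Import all_boot all_order all_algebra.
Set Implicit Arguments. Unset Strict Implicit. Unset Printing Implicit Defensive.
Import GRing.Theory.
Local Open Scope ring_scope.

Definition perfect (K : fieldType) : Prop :=
  forall p : nat, p \in [pchar K] -> forall x : K, exists y : K, y ^+ p = x.

Section DualTMotives.
Variables (Fq : finFieldType) (K : fieldType) (iota0 : {rmorphism Fq -> K}) (theta : K).
(* K is an F_q-algebra via iota0; the A-field structure iota : F_q[t] -> K
   is the F_q-algebra map with iota(t) = theta. *)
Local Notation q := #|Fq|.

(* action of a twisted polynomial sum_j f_j sigma^j of K{sigma} on h *)
Definition sapply (V : lmodType K) (sg : V -> V) (f : {poly K}) (h : V) : V :=
  \sum_(j < size f) f`_j *: iter j sg h.

(* A dual t-motive: a left K[t,sigma]-module (K-vector space with a K-linear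
   t and a sigma with sigma c = c^(1/q) sigma, commuting with t), free and
   finitely generated over K{sigma}, with (t - theta)^l H contained in sigma H. *)
Record dtm := DTM {
  dtm_car :> lmodType K;
  dtm_t : dtm_car -> dtm_car;
  dtm_sigma : dtm_car -> dtm_car;
  dtm_t_linear : forall (c : K) (x y : dtm_car),
      dtm_t (c *: x + y) = c *: dtm_t x + dtm_t y;
  dtm_sigma_add : forall x y : dtm_car, dtm_sigma (x + y) = dtm_sigma x + dtm_sigma y;
  dtm_sigma_semilinear : forall (c : K) (x : dtm_car),
      dtm_sigma ((c ^+ q) *: x) = c *: dtm_sigma x;
  dtm_t_sigma : forall x : dtm_car, dtm_t (dtm_sigma x) = dtm_sigma (dtm_t x);
  dtm_free : exists (n : nat) (e : 'I_n -> dtm_car),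
      bijective (fun f : {ffun 'I_n -> {poly K}} =>
                   \sum_(i < n) sapply dtm_sigma (f i) (e i));
  dtm_nilp : exists l : nat, forall h : dtm_car, exists h' : dtm_car,
      iter l (fun x => dtm_t x - theta *: x) h = dtm_sigma h'
}.

Definition is_morph (M N : dtm) (f : M -> N) : Prop :=
  [/\ forall (c : K) (x y : M), f (c *: x + y) = c *: f x + f y,
      forall x : M, f (dtm_t x) = dtm_t (f x) &
      forall x : M, f (dtm_sigma x) = dtm_sigma (f x)].

Definition tact (a : {poly Fq}) (M : dtm) (x : M) : M :=
  \sum_(i < size a) iota0 a`_i *: iter i (@dtm_t M) x.

Definition hom_add (M N : dtm) (f g : M -> N) : M -> N := fun x => f x + g x.
Definition hom_scale (a : {poly Fq}) (M N : dtm) (f : M -> N) : M -> N :=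
  fun x => tact a (f x).

(* short exact sequences 0 -> M -> E -> N -> 0 (extensions of N by M) *)
Record ext (N M : dtm) := Ext {
  ext_mid : dtm;
  ext_i : M -> ext_mid;
  ext_p : ext_mid -> N;
  ext_i_morph : is_morph ext_i;
  ext_p_morph : is_morph ext_p;
  ext_i_inj : injective ext_i;
  ext_p_surj : forall y : N, exists x : ext_mid, ext_p x = y;
  ext_exact : forall x : ext_mid, ext_p x = 0 <-> exists m : M, x = ext_i m
}.
Arguments ext_mid {N M} e.
Arguments ext_i {N M} e _.
Arguments ext_p {N M} e _.

Definition ext_equiv (N M : dtm) (e e' : ext N M) : Prop :=
  exists phi : ext_mid e -> ext_mid e',
    [/\ is_morph phi, forall m, phi (ext_i e m) = ext_i e' m &
        forall x, ext_p e' (phi x) = ext_p e x].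

(* Ext^1(N, M): elements are equivalence classes, represented as predicates *)
Definition Ext1 (N M : dtm) := ext N M -> Prop.

Definition is_class (N M : dtm) (C : Ext1 N M) : Prop :=
  exists e : ext N M, forall e', C e' <-> ext_equiv e e'.

Definition ext_split (N M : dtm) (e : ext N M) : Prop :=
  exists s : N -> ext_mid e, is_morph s /\ forall y, ext_p e (s y) = y.

Definition ext_is_zero (N M : dtm) (C : Ext1 N M) : Prop :=
  exists e, C e /\ ext_split e.

Definition push_rel (N A B : dtm) (g : A -> B) (e : ext N A) (e' : ext N B) : Prop :=
  exists phi : ext_mid e -> ext_mid e',
    [/\ is_morph phi, forall m, phi (ext_i e m) = ext_i e' (g m) &
        forall x, ext_p e' (phi x) = ext_p e x].

Definition pull_rel (N N' A : dtm) (f : N' -> N) (e : ext N A) (e' : ext N' A) : Prop :=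
  exists phi : ext_mid e' -> ext_mid e,
    [/\ is_morph phi, forall m, phi (ext_i e' m) = ext_i e m &
        forall x, ext_p e (phi x) = f (ext_p e' x)].

Definition push_map (N A B : dtm) (g : A -> B) (C : Ext1 N A) : Ext1 N B :=
  fun e' => exists e, C e /\ push_rel g e e'.

Definition pull_map (N N' A : dtm) (f : N' -> N) (C : Ext1 N A) : Ext1 N' A :=
  fun e' => exists e, C e /\ pull_rel f e e'.

(* e is (equivalent to) the Baer sum of e1 and e2: there is a morphism from the
   fibre product E1 x_N E2 to E which is the codiagonal on M + M and lies over
   the identity of N. *)
Definition baer_rel (N M : dtm) (e1 e2 e : ext N M) : Prop :=
  exists phi : ext_mid e1 -> ext_mid e2 -> ext_mid e,
    let compat x1 x2 := ext_p e1 x1 = ext_p e2 x2 in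
    [/\ forall (c : K) x1 x2 y1 y2, compat x1 x2 -> compat y1 y2 ->
          phi (c *: x1 + y1) (c *: x2 + y2) = c *: phi x1 x2 + phi y1 y2,
        forall x1 x2, compat x1 x2 -> phi (dtm_t x1) (dtm_t x2) = dtm_t (phi x1 x2),
        forall x1 x2, compat x1 x2 ->
          phi (dtm_sigma x1) (dtm_sigma x2) = dtm_sigma (phi x1 x2),
        forall m1 m2, phi (ext_i e1 m1) (ext_i e2 m2) = ext_i e (m1 + m2) &
        forall x1 x2, compat x1 x2 -> ext_p e (phi x1 x2) = ext_p e1 x1].

Definition ext_add (N M : dtm) (C1 C2 : Ext1 N M) : Ext1 N M :=
  fun e => exists e1 e2, [/\ C1 e1, C2 e2 & baer_rel e1 e2 e].

Definition ext_scale (a : {poly Fq}) (N M : dtm) (C : Ext1 N M) : Ext1 N M :=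
  push_map (@tact a M) C.

Definition delta_cov (M1 M2 N : dtm) (E : ext M2 M1) (h : N -> M2) : Ext1 N M1 :=
  fun e => pull_rel h E e.
Definition delta_contra (M1 M2 N : dtm) (E : ext M2 M1) (k : M1 -> N) : Ext1 M2 N :=
  fun e => push_rel k E e.

Definition long_exact_cov (M1 M2 : dtm) (E : ext M2 M1) (N : dtm) : Prop :=
  let M := ext_mid E in
  let i := ext_i E in
  let p := ext_p E in
  let delta := delta_cov E (N := N) in
  ((forall f g : N -> M1, is_morph f -> is_morph g ->
         i \o hom_add f g = hom_add (i \o f) (i \o g)) /\
      (forall a (f : N -> M1), is_morph f -> i \o hom_scale a f = hom_scale a (i \o f)) /\
      (forall f g : N -> M, is_morph f -> is_morph g ->
         p \o hom_add f g = hom_add (p \o f) (p \o g)) /\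
      (forall a (f : N -> M), is_morph f -> p \o hom_scale a f = hom_scale a (p \o f)) /\
      (forall h1 h2 : N -> M2, is_morph h1 -> is_morph h2 ->
         delta (hom_add h1 h2) = ext_add (delta h1) (delta h2)) /\
      (forall a (h : N -> M2), is_morph h -> delta (hom_scale a h) = ext_scale a (delta h)) /\
      (forall C1 C2 : Ext1 N M1, is_class C1 -> is_class C2 ->
         push_map i (ext_add C1 C2) = ext_add (push_map i C1) (push_map i C2)) /\
      (forall a (C : Ext1 N M1), is_class C ->
         push_map i (ext_scale a C) = ext_scale a (push_map i C)) /\
      (forall C1 C2 : Ext1 N M, is_class C1 -> is_class C2 ->
         push_map p (ext_add C1 C2) = ext_add (push_map p C1) (push_map p C2)) /\
      (forall a (C : Ext1 N M), is_class C ->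
         push_map p (ext_scale a C) = ext_scale a (push_map p C)))
  /\
  ((forall f g : N -> M1, is_morph f -> is_morph g -> i \o f = i \o g -> f = g) /\
      (forall g : N -> M, is_morph g ->
         (p \o g = (fun _ => 0)) <-> exists f : N -> M1, is_morph f /\ g = i \o f) /\
      (forall h : N -> M2, is_morph h ->
         ext_is_zero (delta h) <-> exists g : N -> M, is_morph g /\ h = p \o g) /\
      (forall C : Ext1 N M1, is_class C ->
         ext_is_zero (push_map i C) <-> exists h : N -> M2, is_morph h /\ C = delta h) /\
      (forall C : Ext1 N M, is_class C ->
         ext_is_zero (push_map p C) <->
         exists C' : Ext1 N M1, is_class C' /\ C = push_map i C') /\
      (forall C : Ext1 N M2, is_class C ->
         exists C' : Ext1 N M, is_class C' /\ push_map p C' = C)).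

Definition long_exact_contra (M1 M2 : dtm) (E : ext M2 M1) (N : dtm) : Prop :=
  let M := ext_mid E in
  let i := ext_i E in
  let p := ext_p E in
  let delta := delta_contra E (N := N) in
  ((forall f g : M2 -> N, is_morph f -> is_morph g ->
         hom_add f g \o p = hom_add (f \o p) (g \o p)) /\
      (forall a (f : M2 -> N), is_morph f -> hom_scale a f \o p = hom_scale a (f \o p)) /\
      (forall f g : M -> N, is_morph f -> is_morph g ->
         hom_add f g \o i = hom_add (f \o i) (g \o i)) /\
      (forall a (f : M -> N), is_morph f -> hom_scale a f \o i = hom_scale a (f \o i)) /\
      (forall k1 k2 : M1 -> N, is_morph k1 -> is_morph k2 ->
         delta (hom_add k1 k2) = ext_add (delta k1) (delta k2)) /\
      (forall a (k : M1 -> N), is_morph k -> delta (hom_scale a k) = ext_scale a (delta k)) /\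
      (forall C1 C2 : Ext1 M2 N, is_class C1 -> is_class C2 ->
         pull_map p (ext_add C1 C2) = ext_add (pull_map p C1) (pull_map p C2)) /\
      (forall a (C : Ext1 M2 N), is_class C ->
         pull_map p (ext_scale a C) = ext_scale a (pull_map p C)) /\
      (forall C1 C2 : Ext1 M N, is_class C1 -> is_class C2 ->
         pull_map i (ext_add C1 C2) = ext_add (pull_map i C1) (pull_map i C2)) /\
      (forall a (C : Ext1 M N), is_class C ->
         pull_map i (ext_scale a C) = ext_scale a (pull_map i C)))
  /\
  ((forall f g : M2 -> N, is_morph f -> is_morph g -> f \o p = g \o p -> f = g) /\
      (forall g : M -> N, is_morph g ->
         (g \o i = (fun _ => 0)) <-> exists f : M2 -> N, is_morph f /\ g = f \o p) /\
      (forall k : M1 -> N, is_morph k ->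
         ext_is_zero (delta k) <-> exists g : M -> N, is_morph g /\ k = g \o i) /\
      (forall C : Ext1 M2 N, is_class C ->
         ext_is_zero (pull_map p C) <-> exists k : M1 -> N, is_morph k /\ C = delta k) /\
      (forall C : Ext1 M N, is_class C ->
         ext_is_zero (pull_map i C) <->
         exists C' : Ext1 M2 N, is_class C' /\ C = pull_map p C') /\
      (forall C : Ext1 M1 N, is_class C ->
         exists C' : Ext1 M N, is_class C' /\ pull_map i C' = C)).

End DualTMotives.

(* Since K is perfect, sigma c = c^(1/q) sigma lets scalars move past sigma, so a dual
   t-motive, being free over K{sigma}, is projective for K-linear maps commuting with sigma
   ("sigma-linear" maps): every extension 0 -> A -> E -> C -> 0 splits sigma-linearly as
   E = A (+) C, with t (a, c) = (t a + phi c, t c) for a sigma-linear cocycle phi : C -> A.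
   The extension is determined up to equivalence by phi modulo the coboundaries t f - f t,
   and pushout, pullback, Baer sum and the action of a(t) become composition, addition and
   multiplication by a(t) of cocycles. Thus Hom(C, A) and Ext^1(C, A) are the kernel and
   the cokernel of f |-> t f - f t on sigma-linear maps C -> A. Since the given sequence
   splits sigma-linearly, it induces short exact sequences of sigma-linear maps in either
   variable, and both long exact sequences are the snake lemma for this endomorphism, the
   connecting map being composition with the cocycle of the given sequence. *)

From HB Require Import structures.
From mathcomp Require Import all_boot all_order all_algebra all_field.
From Stdlib Require Import FunctionalExtensionality PropExtensionality ClassicalEpsilon.
Set Implicit Arguments. Unset Strict Implicit. Unset Printing Implicit Defensive.
Import GRing.Theory.
Local Open Scope ring_scope.
Arguments ext_p [Fq K theta N M] e _.
Arguments ext_exact [Fq K theta N M] e x.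
Arguments ext_i_inj [Fq K theta N M] e [x1 x2] _.
Arguments dtm_t {Fq K theta d} _.
Arguments dtm_sigma {Fq K theta d} _.

Section Development.
Variables (Fq : finFieldType) (K : fieldType) (iota0 : {rmorphism Fq -> K}) (theta : K).
Hypothesis hK : perfect K.
Local Notation motive := (dtm Fq theta).
Local Notation q := #|Fq|.

Definition sigma_linear (A B : motive) (f : A -> B) :=
  linear f /\ forall x, f (dtm_sigma x) = dtm_sigma (f x).

Section SigmaLinearMap.
Variables (A B : motive) (f : A -> B).
Hypothesis hf : sigma_linear f.

Lemma sigma_linear0 : f 0 = 0.
Proof. by have := hf.1 (-1) 0 0; rewrite scaler0 addr0 scaleN1r addNr. Qed.
Lemma sigma_linearD x y : f (x + y) = f x + f y.
Proof. by have := hf.1 1 x y; rewrite !scale1r. Qed.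
Lemma sigma_linearZ c x : f (c *: x) = c *: f x.
Proof. by have := hf.1 c x 0; rewrite !addr0 sigma_linear0 addr0. Qed.
Lemma sigma_linearN x : f (- x) = - f x.
Proof. by rewrite -scaleN1r sigma_linearZ scaleN1r. Qed.
Lemma sigma_linearB x y : f (x - y) = f x - f y.
Proof. by rewrite sigma_linearD sigma_linearN. Qed.
Lemma sigma_linearS x : f (dtm_sigma x) = dtm_sigma (f x).
Proof. exact: hf.2. Qed.
Lemma sigma_linear_sum I (r : seq I) (P : pred I) (F : I -> A) :
  f (\sum_(i <- r | P i) F i) = \sum_(i <- r | P i) f (F i).
Proof. exact: (big_morph f sigma_linearD sigma_linear0). Qed.
End SigmaLinearMap.

Section MotiveStructure.
Variable H : motive.

Lemma dtm_sigma0 : dtm_sigma (0 : H) = 0.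
Proof. by apply: (addrI (dtm_sigma (0 : H))); rewrite -dtm_sigma_add !addr0. Qed.
Lemma dtm_sigmaN (x : H) : dtm_sigma (- x) = - dtm_sigma x.
Proof. by apply: (addrI (dtm_sigma x)); rewrite -dtm_sigma_add !subrr dtm_sigma0. Qed.
Lemma dtm_sigma_sum I (r : seq I) (P : pred I) (F : I -> H) :
  dtm_sigma (\sum_(i <- r | P i) F i) = \sum_(i <- r | P i) dtm_sigma (F i).
Proof. exact: (big_morph _ (@dtm_sigma_add _ _ _ H) dtm_sigma0). Qed.
Lemma sigma_linear_t : sigma_linear (@dtm_t _ _ _ H).
Proof. by split; [exact: dtm_t_linear | exact: dtm_t_sigma]. Qed.
Lemma dtm_tD (x y : H) : dtm_t (x + y) = dtm_t x + dtm_t y.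
Proof. exact: sigma_linearD sigma_linear_t x y. Qed.
End MotiveStructure.

Section SigmaLinearClosure.
Variables (A B C : motive).

Lemma sigma_linear_comp (f : B -> C) (g : A -> B) :
  sigma_linear f -> sigma_linear g -> sigma_linear (f \o g).
Proof.
move=> hf hg; split=> [c x y | x] /=; first by rewrite hg.1 hf.1.
by rewrite (sigma_linearS hg) (sigma_linearS hf).
Qed.
Lemma sigma_linear_add (f g : A -> B) :
  sigma_linear f -> sigma_linear g -> sigma_linear (fun x => f x + g x).
Proof.
move=> hf hg; split=> [c x y | x]; first by rewrite hf.1 hg.1 scalerDr addrACA.
by rewrite (sigma_linearS hf) (sigma_linearS hg) dtm_sigma_add.
Qed.
Lemma sigma_linear_opp (f : A -> B) : sigma_linear f -> sigma_linear (fun x => - f x).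
Proof.
move=> hf; split=> [c x y | x]; first by rewrite hf.1 opprD scalerN.
by rewrite (sigma_linearS hf) dtm_sigmaN.
Qed.
Lemma sigma_linear_sub (f g : A -> B) :
  sigma_linear f -> sigma_linear g -> sigma_linear (fun x => f x - g x).
Proof. by move=> hf hg; apply/sigma_linear_add/sigma_linear_opp. Qed.
Lemma sigma_linear_cst0 : sigma_linear (fun _ : A => (0 : B)).
Proof. by split=> [c x y | x]; rewrite ?scaler0 ?addr0 ?dtm_sigma0. Qed.
End SigmaLinearClosure.

Lemma is_morphP (A B : motive) (f : A -> B) :
  is_morph f <-> sigma_linear f /\ forall x, f (dtm_t x) = dtm_t (f x).
Proof. by split=> [[hl ht hs] | [[hl hs] ht]]. Qed.

Lemma morph_sigma_linear (A B : motive) (f : A -> B) : is_morph f -> sigma_linear f.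
Proof. by case/is_morphP. Qed.
Lemma morph_tC (A B : motive) (f : A -> B) :
  is_morph f -> forall x, f (dtm_t x) = dtm_t (f x).
Proof. by case/is_morphP. Qed.
Lemma morph_iter_tC (A B : motive) (f : A -> B) :
  is_morph f -> forall n x, f (iter n (@dtm_t _ _ _ A) x) = iter n (@dtm_t _ _ _ B) (f x).
Proof. by move=> hf; elim=> //= n IH x; rewrite (morph_tC hf) IH. Qed.

Section Morphisms.
Variables (A B C : motive).

Lemma morph_id : is_morph (@id A).
Proof. by []. Qed.
Lemma morph_comp (f : B -> C) (g : A -> B) : is_morph f -> is_morph g -> is_morph (f \o g).
Proof.
move=> hf hg; apply/is_morphP; split=> [|x /=].
  exact: sigma_linear_comp (morph_sigma_linear hf) (morph_sigma_linear hg).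
by rewrite (morph_tC hg) (morph_tC hf).
Qed.
Lemma morph_t : is_morph (@dtm_t _ _ _ A).
Proof. exact/is_morphP/(conj (sigma_linear_t A)). Qed.
Lemma morph_iter_t n : is_morph (iter n (@dtm_t _ _ _ A)).
Proof.
elim: n => [|n IH]; first exact: morph_id.
apply/is_morphP; split=> [|x /=]; last by rewrite (morph_tC IH).
exact: sigma_linear_comp (sigma_linear_t A) (morph_sigma_linear IH).
Qed.
Lemma morph_hom_add (f g : A -> B) : is_morph f -> is_morph g -> is_morph (hom_add f g).
Proof.
move=> hf hg; apply/is_morphP; split=> [|x].
  exact: sigma_linear_add (morph_sigma_linear hf) (morph_sigma_linear hg).
by rewrite /hom_add (morph_tC hf) (morph_tC hg) dtm_tD.
Qed.
End Morphisms.

Lemma iota_expq (x : Fq) : iota0 x ^+ q = iota0 x.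
Proof. by rewrite -rmorphXn expf_card. Qed.

Lemma tact_natural (A B : motive) (g : A -> B) a :
  is_morph g -> forall x, g (tact iota0 a x) = tact iota0 a (g x).
Proof.
move=> hg x; rewrite /tact (sigma_linear_sum (morph_sigma_linear hg)); apply: eq_bigr => i _.
by rewrite (sigma_linearZ (morph_sigma_linear hg)) (morph_iter_tC hg).
Qed.

Lemma tact_morph (A : motive) a : is_morph (tact iota0 a (M := A)).
Proof.
have hi i := morph_sigma_linear (morph_iter_t A i).
apply/is_morphP; split; first split.
- move=> c x y; rewrite /tact scaler_sumr -big_split; apply: eq_bigr => i _ /=.
  by rewrite (hi i).1 scalerDr !scalerA mulrC.
- move=> x; rewrite /tact dtm_sigma_sum; apply: eq_bigr => i _.
  by rewrite -[in RHS](iota_expq a`_i) dtm_sigma_semilinear (sigma_linearS (hi i)).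
- by move=> x; rewrite (tact_natural a (morph_t A)).
Qed.
Lemma morph_hom_scale (A B : motive) a (f : A -> B) :
  is_morph f -> is_morph (hom_scale iota0 a f).
Proof. exact: morph_comp (tact_morph _ a). Qed.

(** * Freeness over K{sigma} and sigma-linear sections *)

Section TwistedPolynomials.
Variables (V : lmodType K) (sg : V -> V).

Lemma sapply_widen (f : {poly K}) h n :
  (size f <= n)%N -> sapply sg f h = \sum_(j < n) f`_j *: iter j sg h.
Proof.
move=> hn; rewrite /sapply (big_ord_widen n (fun j => f`_j *: iter j sg h) hn) big_mkcond.
apply: eq_bigr => i _; case: ifP => // /negbT; rewrite -leqNgt => hi.
by rewrite nth_default // scale0r.
Qed.
Lemma sapplyD (f g : {poly K}) h : sapply sg (f + g) h = sapply sg f h + sapply sg g h.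
Proof.
pose n := maxn (size f) (size g).
rewrite (@sapply_widen _ _ n); last exact: leq_trans (size_polyD _ _) _.
rewrite (@sapply_widen f _ n (leq_maxl _ _)) (@sapply_widen g _ n (leq_maxr _ _)).
by rewrite -big_split; apply: eq_bigr => i _; rewrite coefD scalerDl.
Qed.
Lemma sapplyZ (c : K) (f : {poly K}) h : sapply sg (c *: f) h = c *: sapply sg f h.
Proof.
rewrite (sapply_widen _ (size_scale_leq c f)) /sapply scaler_sumr.
by apply: eq_bigr => i _; rewrite coefZ scalerA.
Qed.
End TwistedPolynomials.

Lemma sapply_sigma_linear (A B : motive) (f : A -> B) (g : {poly K}) x : sigma_linear f ->
  f (sapply (@dtm_sigma _ _ _ A) g x) = sapply (@dtm_sigma _ _ _ B) g (f x).
Proof.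
move=> hf; have iterS j y : f (iter j (@dtm_sigma _ _ _ A) y) = iter j (@dtm_sigma _ _ _ B) (f y).
  by elim: j => //= j IH; rewrite (sigma_linearS hf) IH.
rewrite /sapply (sigma_linear_sum hf); apply: eq_bigr => i _.
by rewrite (sigma_linearZ hf) iterS.
Qed.

Lemma qth_root (x : K) : exists y : K, y ^+ q == x.
Proof.
have [p p_pr pFq] := finPcharP Fq.
have pK : p \in [pchar K] := rmorph_pchar iota0 pFq.
rewrite (card_pprimeChar pFq); elim: (logn p q) x => [|n IH] x; first by exists x.
have [z <-] := hK pK x; have [y /eqP <-] := IH z.
by exists y; rewrite expnSr exprM.
Qed.

Definition qroot (c : K) : K := xchoose (qth_root c).

Lemma qrootK c : qroot c ^+ q = c.
Proof. exact/eqP/(xchooseP (qth_root c)). Qed.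

(* The product [sigma * f] in K{sigma}: as [sigma c = c^(1/q) sigma], its coefficients are
   the q-th roots of those of [f], shifted by one. *)
Definition sigma_lmul (f : {poly K}) : {poly K} :=
  \poly_(j < (size f).+1) (if j is j'.+1 then qroot f`_j' else 0).

Lemma sapply_sigma_lmul (H : motive) f (h : H) :
  sapply dtm_sigma (sigma_lmul f) h = dtm_sigma (sapply dtm_sigma f h).
Proof.
rewrite (sapply_widen _ _ (size_poly _ _)) big_ord_recl coef_poly /= scale0r add0r.
rewrite /sapply dtm_sigma_sum; apply: eq_bigr => i _.
by rewrite coef_poly /= ltnS ltn_ord -{2}(qrootK f`_i) dtm_sigma_semilinear.
Qed.

Lemma sigma_linear_section (C X : motive) (p : X -> C) :
    sigma_linear p -> (forall y, exists x, p x = y) ->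
  exists s : C -> X, sigma_linear s /\ forall c, p (s c) = c.
Proof.
move=> hp p_surj; have [n [e [coord coordK coordV]]] := dtm_free C.
set comb := (fun f : {ffun 'I_n -> {poly K}} => _) in coordK coordV.
have [x px] : {x : 'I_n -> X | forall k, p (x k) = e k}.
  exists (fun k => sval (constructive_indefinite_description _ (p_surj (e k)))).
  by move=> k; case: constructive_indefinite_description.
pose s c := \sum_(i < n) sapply dtm_sigma (coord c i) (x i).
have coord_linear a c c' : coord (a *: c + c') = [ffun i => a *: coord c i + coord c' i].
  rewrite -[RHS]coordK; congr coord; rewrite /comb.
  under eq_bigr => i _ do rewrite ffunE sapplyD sapplyZ.
  by rewrite big_split /= -scaler_sumr -/(comb (coord c)) -/(comb (coord c')) !coordV.
have coord_sigma c : coord (dtm_sigma c) = [ffun i => sigma_lmul (coord c i)].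
  rewrite -[RHS]coordK; congr coord; rewrite /comb.
  under eq_bigr => i _ do rewrite ffunE sapply_sigma_lmul.
  by rewrite -dtm_sigma_sum -/(comb (coord c)) coordV.
exists s; split; first split.
- move=> a c c'; rewrite /s coord_linear.
  under eq_bigr => i _ do rewrite ffunE sapplyD sapplyZ.
  by rewrite big_split /= -scaler_sumr.
- move=> c; rewrite /s coord_sigma dtm_sigma_sum; apply: eq_bigr => i _.
  by rewrite ffunE sapply_sigma_lmul.
- move=> c; rewrite /s (sigma_linear_sum hp) -[RHS]coordV /comb; apply: eq_bigr => i _.
  by rewrite (sapply_sigma_linear _ _ hp) px.
Qed.

(** * Splittings, cocycles and coboundaries *)

Section ExtensionStructure.
Variables (C A : motive) (e : ext C A).

Lemma ext_i_sigma_linear : sigma_linear (ext_i e).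
Proof. exact: morph_sigma_linear (ext_i_morph e). Qed.
Lemma ext_p_sigma_linear : sigma_linear (ext_p e).
Proof. exact: morph_sigma_linear (ext_p_morph e). Qed.
Lemma ext_i_t a : ext_i e (dtm_t a) = dtm_t (ext_i e a).
Proof. exact: morph_tC (ext_i_morph e) a. Qed.
Lemma ext_p_t x : ext_p e (dtm_t x) = dtm_t (ext_p e x).
Proof. exact: morph_tC (ext_p_morph e) x. Qed.
Lemma ext_p_i a : ext_p e (ext_i e a) = 0.
Proof. by apply/(ext_exact e); exists a. Qed.

Record sigma_splitting := SigmaSplitting {
  sect : C -> ext_mid e;
  retr : ext_mid e -> A;
  sect_sigma_linear : sigma_linear sect;
  retr_sigma_linear : sigma_linear retr;
  ext_p_sect : forall c, ext_p e (sect c) = c;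
  retr_ext_i : forall a, retr (ext_i e a) = a;
  ext_decomp : forall x, x = ext_i e (retr x) + sect (ext_p e x)
}.

Lemma sigma_splitting_exists : inhabited sigma_splitting.
Proof.
have [s [hs ps]] := sigma_linear_section ext_p_sigma_linear (ext_p_surj e).
have px x : ext_p e (x - s (ext_p e x)) = 0.
  by rewrite (sigma_linearB ext_p_sigma_linear) ps subrr.
have [r hr] : {r : ext_mid e -> A | forall x, x - s (ext_p e x) = ext_i e (r x)}.
  exists (fun x => sval (constructive_indefinite_description _ (proj1 (ext_exact e _) (px x)))).
  by move=> x; case: constructive_indefinite_description.
have hr_lin : sigma_linear r.
  split=> [c x y | x]; apply: (ext_i_inj e).
    rewrite ext_i_sigma_linear.1 -!hr ext_p_sigma_linear.1 hs.1.
    by rewrite scalerBr opprD addrACA.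
  rewrite (sigma_linearS ext_i_sigma_linear) -!hr (sigma_linearS ext_p_sigma_linear).
  by rewrite (sigma_linearS hs) dtm_sigma_add dtm_sigmaN.
have ri a : r (ext_i e a) = a.
  by apply: (ext_i_inj e); rewrite -hr ext_p_i (sigma_linear0 hs) subr0.
by constructor; apply: (SigmaSplitting hs hr_lin ps ri) => x; rewrite -hr subrK.
Qed.

Variable S : sigma_splitting.
Local Notation s := (sect S).
Local Notation r := (retr S).

(* Via [x |-> (retr x, ext_p e x)], [ext_mid e] becomes [A * C] with
   [t (a, c) = (t a + cocycle c, t c)]; compare [twisted_motive]. *)
Definition cocycle (c : C) : A := r (dtm_t (s c)).

Lemma retr_sect c : r (s c) = 0.
Proof.
apply: (ext_i_inj e); rewrite (sigma_linear0 ext_i_sigma_linear).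
by apply: (addIr (s c)); rewrite add0r {3}(ext_decomp S (s c)) ext_p_sect.
Qed.
Lemma cocycle_sigma_linear : sigma_linear cocycle.
Proof.
apply: sigma_linear_comp (retr_sigma_linear S) _.
exact: sigma_linear_comp (sigma_linear_t _) (sect_sigma_linear S).
Qed.
Lemma t_sect c : dtm_t (s c) = ext_i e (cocycle c) + s (dtm_t c).
Proof. by rewrite {1}(ext_decomp S (dtm_t (s c))) ext_p_t ext_p_sect. Qed.
Lemma retr_t x : r (dtm_t x) = dtm_t (r x) + cocycle (ext_p e x).
Proof.
have r_lin := retr_sigma_linear S.
rewrite {1}(ext_decomp S x) dtm_tD -ext_i_t t_sect !(sigma_linearD r_lin).
by rewrite !retr_ext_i retr_sect addr0.
Qed.
End ExtensionStructure.

Arguments sigma_splitting_exists [C A] e.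

Definition coboundary (C A : motive) (psi : C -> A) :=
  exists f : C -> A, sigma_linear f /\ forall c, psi c = dtm_t (f c) - f (dtm_t c).

Section Coboundaries.
Variables (C A : motive).

Lemma coboundary_eq (psi psi' : C -> A) :
  (forall c, psi c = psi' c) -> coboundary psi -> coboundary psi'.
Proof. by move=> E [f [hf hfe]]; exists f; split=> // c; rewrite -E. Qed.
Lemma coboundary0 : coboundary (fun _ : C => (0 : A)).
Proof.
exists (fun _ => 0); split; first exact: sigma_linear_cst0.
by move=> c; rewrite (sigma_linear0 (sigma_linear_t A)) subrr.
Qed.
Lemma coboundaryD (psi1 psi2 : C -> A) :
  coboundary psi1 -> coboundary psi2 -> coboundary (fun c => psi1 c + psi2 c).
Proof.
move=> [f1 [h1 e1]] [f2 [h2 e2]]; exists (fun c => f1 c + f2 c).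
by split=> [|c]; [exact: sigma_linear_add | rewrite e1 e2 dtm_tD opprD addrACA].
Qed.
Lemma coboundaryN (psi : C -> A) : coboundary psi -> coboundary (fun c => - psi c).
Proof.
move=> [f [hf e]]; exists (fun c => - f c); split=> [|c]; first exact: sigma_linear_opp.
by rewrite e (sigma_linearN (sigma_linear_t A)) opprB opprK addrC.
Qed.
Lemma coboundaryB (psi1 psi2 : C -> A) :
  coboundary psi1 -> coboundary psi2 -> coboundary (fun c => psi1 c - psi2 c).
Proof. by move=> h1 h2; apply/coboundaryD/coboundaryN. Qed.
Lemma coboundary_sum I (r : seq I) (F : I -> C -> A) :
  (forall i, coboundary (F i)) -> coboundary (fun x => \sum_(i <- r) F i x).
Proof.
move=> hF; elim: r => [|j r IH]; first by apply: coboundary_eq coboundary0 => x; rewrite big_nil.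
by apply: coboundary_eq (coboundaryD (hF j) IH) => x; rewrite big_cons.
Qed.
Lemma coboundary_commutator (psi : C -> A) :
  sigma_linear psi -> coboundary (fun x => psi (dtm_t x) - dtm_t (psi x)).
Proof.
move=> hp; exists (fun c => - psi c); split=> [|c]; first exact: sigma_linear_opp.
by rewrite (sigma_linearN (sigma_linear_t A)) opprK addrC.
Qed.
(* Only scalars fixed by [c |-> c ^+ q] commute with [sigma]. *)
Lemma coboundaryZ (c : K) (psi : C -> A) :
  c ^+ q = c -> coboundary psi -> coboundary (fun x => c *: psi x).
Proof.
move=> hc [f [hf e]]; exists (fun x => c *: f x); split=> [|x].
  split=> [a x y | x]; first by rewrite hf.1 scalerDr !scalerA mulrC.
  by rewrite (sigma_linearS hf) -[in RHS]hc dtm_sigma_semilinear.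
by rewrite e (sigma_linearZ (sigma_linear_t A)) scalerBr.
Qed.
End Coboundaries.

Lemma coboundary_compl (C A A' : motive) (g : A -> A') (psi : C -> A) :
  is_morph g -> coboundary psi -> coboundary (fun c => g (psi c)).
Proof.
move=> hg [f [hf e]]; exists (fun c => g (f c)); split=> [|c].
  exact: sigma_linear_comp (morph_sigma_linear hg) hf.
by rewrite e (sigma_linearB (morph_sigma_linear hg)) (morph_tC hg).
Qed.
Lemma coboundary_compr (C C' A : motive) (h : C' -> C) (psi : C -> A) :
  is_morph h -> coboundary psi -> coboundary (fun c => psi (h c)).
Proof.
move=> hh [f [hf e]]; exists (fun c => f (h c)); split=> [|c].
  exact: sigma_linear_comp hf (morph_sigma_linear hh).
by rewrite e (morph_tC hh).
Qed.

Lemma coboundary_tact (C A : motive) (psi : C -> A) a : sigma_linear psi ->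
  coboundary (fun x => psi (tact iota0 a x) - tact iota0 a (psi x)).
Proof.
move=> hp.
have iter_comm n : coboundary (fun x => psi (iter n dtm_t x) - iter n dtm_t (psi x)).
  elim: n => [|n IH]; first by apply: coboundary_eq (coboundary0 C A) => x; rewrite subrr.
  have := coboundaryD (coboundary_compr (morph_iter_t C n) (coboundary_commutator hp))
                      (coboundary_compl (morph_t A) IH).
  apply: coboundary_eq => x /=.
  by rewrite (sigma_linearB (sigma_linear_t A)) addrA subrK (morph_iter_tC (morph_t C)).
have := coboundary_sum (index_enum 'I_(size a))
  (fun i : 'I_(size a) => coboundaryZ (iota_expq a`_i) (iter_comm i)).
apply: coboundary_eq => x; rewrite /tact (sigma_linear_sum hp) -sumrB.
by apply: eq_bigr => i _; rewrite (sigma_linearZ hp) scalerBr.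
Qed.

Definition ext_morph (C A C' A' : motive) (e : ext C A) (e' : ext C' A')
    (g : A -> A') (h : C -> C') (Phi : ext_mid e -> ext_mid e') :=
  [/\ is_morph Phi, forall a, Phi (ext_i e a) = ext_i e' (g a) &
      forall x, ext_p e' (Phi x) = h (ext_p e x)].
Arguments ext_morph [C A C' A'] e e' g h Phi.

Lemma ext_morph_iff_coboundary (C A C' A' : motive) (e : ext C A) (e' : ext C' A')
    (S : sigma_splitting e) (S' : sigma_splitting e') (g : A -> A') (h : C -> C') :
    is_morph g -> is_morph h ->
  (exists Phi, ext_morph e e' g h Phi) <->
  coboundary (fun c => g (cocycle S c) - cocycle S' (h c)).
Proof.
move=> hg hh; have g_lin := morph_sigma_linear hg; have h_lin := morph_sigma_linear hh.
split=> [[Phi [hPhi Phi_i Phi_p]] | [f [hf hfe]]].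
  have Phi_lin := morph_sigma_linear hPhi.
  exists (fun c => retr S' (Phi (sect S c))); split=> [|c].
    apply: sigma_linear_comp (retr_sigma_linear S') _.
    exact: sigma_linear_comp Phi_lin (sect_sigma_linear S).
  have E1 : retr S' (Phi (dtm_t (sect S c))) =
            g (cocycle S c) + retr S' (Phi (sect S (dtm_t c))).
    rewrite t_sect (sigma_linearD Phi_lin) Phi_i.
    by rewrite (sigma_linearD (retr_sigma_linear S')) retr_ext_i.
  have E2 : retr S' (Phi (dtm_t (sect S c))) =
            dtm_t (retr S' (Phi (sect S c))) + cocycle S' (h c).
    by rewrite (morph_tC hPhi) retr_t Phi_p ext_p_sect.
  by apply/eqP; rewrite subr_eq addrAC eq_sym subr_eq -E2 E1.
have cocycle_rel c : g (cocycle S c) + f (dtm_t c) = dtm_t (f c) + cocycle S' (h c).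
  by rewrite -[g _](subrK (cocycle S' (h c))) hfe addrAC subrK.
exists (fun x => ext_i e' (g (retr S x) + f (ext_p e x)) + sect S' (h (ext_p e x))).
split=> [|a|x].
- apply/is_morphP; split=> [|x].
    have p_lin := ext_p_sigma_linear e.
    apply: sigma_linear_add; last first.
      exact: sigma_linear_comp (sect_sigma_linear S') (sigma_linear_comp h_lin p_lin).
    apply: sigma_linear_comp (ext_i_sigma_linear e') (sigma_linear_add _ _).
      exact: sigma_linear_comp g_lin (retr_sigma_linear S).
    exact: sigma_linear_comp hf p_lin.
  rewrite retr_t ext_p_t (sigma_linearD g_lin) (morph_tC hg) (morph_tC hh) -addrA cocycle_rel.
  rewrite dtm_tD -ext_i_t t_sect dtm_tD -(morph_tC hg).
  by rewrite !(sigma_linearD (ext_i_sigma_linear e')) !addrA.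
- rewrite retr_ext_i ext_p_i (sigma_linear0 hf) (sigma_linear0 h_lin).
  by rewrite (sigma_linear0 (sect_sigma_linear S')) !addr0.
- by rewrite (sigma_linearD (ext_p_sigma_linear e')) ext_p_i ext_p_sect add0r.
Qed.

(** * The extension with a prescribed cocycle *)

Lemma sum_pair (V W : zmodType) I (r : seq I) (P : pred I) (u : I -> V) (v : I -> W) :
  \sum_(i <- r | P i) ((u i, v i) : V * W) = (\sum_(i <- r | P i) u i, \sum_(i <- r | P i) v i).
Proof.
elim: r => [|i r IH]; rewrite ?big_nil ?big_cons //.
by case: (P i); rewrite IH.
Qed.

Lemma iter_tau_sigma (V : lmodType K) (t sg : V -> V) :
    (forall x y, sg (x - y) = sg x - sg y) ->
    (forall (c : K) x, sg (c ^+ q *: x) = c *: sg x) ->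
    (forall x, t (sg x) = sg (t x)) ->
  forall n y, exists y', iter n (fun x => t x - theta *: x) (sg y) = sg y'.
Proof.
move=> sgB sgZ tsg; elim=> [|n IH] y; first by exists y.
have [y' IHy] := IH y; exists (t y' - theta ^+ q *: y').
by rewrite /= IHy sgB sgZ tsg.
Qed.

Section TwistedExtension.
Variables (A C : motive) (phi : C -> A).
Hypothesis phi_lin : sigma_linear phi.

Definition twisted_t (x : A * C) : A * C := (dtm_t x.1 + phi x.2, dtm_t x.2).
Definition twisted_sigma (x : A * C) : A * C := (dtm_sigma x.1, dtm_sigma x.2).
Local Notation tau := (fun x : A * C => twisted_t x - theta *: x).

Lemma twisted_t_linear (c : K) (x y : A * C) :
  twisted_t (c *: x + y) = c *: twisted_t x + twisted_t y.
Proof.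
case: x y => [a b] [a' b']; rewrite /twisted_t /=; congr pair; last exact: dtm_t_linear.
by rewrite dtm_t_linear phi_lin.1 /= scalerDr addrACA.
Qed.
Lemma twisted_sigma_add x y : twisted_sigma (x + y) = twisted_sigma x + twisted_sigma y.
Proof. by case: x y => [a b] [a' b']; rewrite /twisted_sigma /= !dtm_sigma_add. Qed.
Lemma twisted_sigmaB x y : twisted_sigma (x - y) = twisted_sigma x - twisted_sigma y.
Proof.
by case: x y => [a b] [a' b']; congr pair => /=; rewrite dtm_sigma_add dtm_sigmaN.
Qed.
Lemma twisted_sigma_semilinear (c : K) x : twisted_sigma (c ^+ q *: x) = c *: twisted_sigma x.
Proof. by case: x => [a b]; rewrite /twisted_sigma /= !dtm_sigma_semilinear. Qed.
Lemma twisted_t_sigma x : twisted_t (twisted_sigma x) = twisted_sigma (twisted_t x).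
Proof.
case: x => [a b]; rewrite /twisted_t /twisted_sigma /=.
by rewrite !dtm_t_sigma (sigma_linearS phi_lin) dtm_sigma_add.
Qed.

Lemma sapply_twisted_sigma f (a : A) (b : C) :
  sapply twisted_sigma f (a, b) = (sapply dtm_sigma f a, sapply dtm_sigma f b).
Proof.
have iter_pair j : iter j twisted_sigma (a, b) = (iter j dtm_sigma a, iter j dtm_sigma b).
  by elim: j => //= j ->.
by rewrite /sapply -sum_pair; apply: eq_bigr => i _; rewrite iter_pair.
Qed.

Lemma twisted_free : exists (n : nat) (e : 'I_n -> A * C),
  bijective (fun f : {ffun 'I_n -> {poly K}} => \sum_(i < n) sapply twisted_sigma (f i) (e i)).
Proof.
have [nA [eA [coordA coordAK coordAV]]] := dtm_free A.
have [nC [eC [coordC coordCK coordCV]]] := dtm_free C.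
set combA := (fun f : {ffun 'I_nA -> {poly K}} => _) in coordAK coordAV.
set combC := (fun f : {ffun 'I_nC -> {poly K}} => _) in coordCK coordCV.
have sapply0 (H : motive) f : sapply (@dtm_sigma _ _ _ H) f 0 = 0.
  have iter0 j : iter j (@dtm_sigma _ _ _ H) 0 = 0 by elim: j => //= j ->; rewrite dtm_sigma0.
  by rewrite /sapply big1 // => j _; rewrite iter0 scaler0.
pose e i : A * C := match split i with inl k => (eA k, 0) | inr k => (0, eC k) end.
exists (nA + nC)%N, e.
have combE (u : {ffun 'I_(nA + nC) -> {poly K}}) :
    \sum_(i < nA + nC) sapply twisted_sigma (u i) (e i) =
    (combA [ffun k => u (lshift nC k)], combC [ffun k => u (rshift nA k)]).
  rewrite big_split_ord /= /e.
  under eq_bigr => k _ do rewrite (unsplitK (inl _ k)) sapply_twisted_sigma.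
  under [X in _ + X]eq_bigr => k _ do rewrite (unsplitK (inr _ k)) sapply_twisted_sigma.
  rewrite !sum_pair /combA /combC; congr pair => /=.
    rewrite [X in _ + X]big1 ?addr0; last by move=> k _; rewrite sapply0.
    by apply: eq_bigr => k _; rewrite ffunE.
  rewrite big1 ?add0r; last by move=> k _; rewrite sapply0.
  by apply: eq_bigr => k _; rewrite ffunE.
exists (fun x => [ffun i => match split i with inl k => coordA x.1 k | inr k => coordC x.2 k end]).
  move=> u; rewrite combE; apply/ffunP => i; rewrite ffunE /=.
  by case: split_ordP => k ->; rewrite ?coordAK ?coordCK ffunE.
case=> a b; rewrite combE /=; congr pair.
  by rewrite -[RHS]coordAV; congr combA; apply/ffunP => k; rewrite !ffunE (unsplitK (inl _ k)).
by rewrite -[RHS]coordCV; congr combC; apply/ffunP => k; rewrite !ffunE (unsplitK (inr _ k)).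
Qed.

Lemma twisted_nilp : exists l : nat, forall h : A * C, exists h' : A * C,
  iter l tau h = twisted_sigma h'.
Proof.
have [lA hA] := dtm_nilp A; have [lC hC] := dtm_nilp C.
have tauD x y : tau (x + y) = tau x + tau y.
  by have := twisted_t_linear 1 x y; rewrite !scale1r => ->; rewrite scalerDr opprD addrACA.
have iter_tauD n x y : iter n tau (x + y) = iter n tau x + iter n tau y.
  by elim: n => //= n ->; rewrite tauD.
have iter_tau_snd n x : (iter n tau x).2 = iter n (fun y => dtm_t y - theta *: y) x.2.
  by elim: n => //= n ->.
have iter_tau_fst n (a : A) : iter n tau (a, 0) = (iter n (fun y => dtm_t y - theta *: y) a, 0).
  elim: n => //= n ->; rewrite /twisted_t /= (sigma_linear0 phi_lin).
  rewrite (sigma_linear0 (sigma_linear_t C)) addr0.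
  by congr pair => /=; rewrite scaler0 subrr.
exists (lA + lC)%N => -[a b]; rewrite iterD.
have [c' hc'] := hC b.
have -> : iter lC tau (a, b) = ((iter lC tau (a, b)).1, 0) + twisted_sigma (0, c').
  rewrite /twisted_sigma dtm_sigma0 -hc' -(iter_tau_snd lC (a, b)).
  by case: (iter lC tau (a, b)) => u v; congr pair => /=; rewrite ?addr0 ?add0r.
rewrite iter_tauD iter_tau_fst; have [a' ->] := hA (iter lC tau (a, b)).1.
have [y' ->] := iter_tau_sigma twisted_sigmaB twisted_sigma_semilinear twisted_t_sigma lA (0, c').
by exists ((a', 0) + y'); rewrite twisted_sigma_add /twisted_sigma /= dtm_sigma0.
Qed.

Definition twisted_motive : motive :=
  DTM twisted_t_linear twisted_sigma_add twisted_sigma_semilinear twisted_t_sigma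
      twisted_free twisted_nilp.

Lemma twisted_inl_morph : is_morph (fun a : A => (a, 0) : twisted_motive).
Proof.
split=> [c x y | x | x] /=; first by congr pair => /=; rewrite scaler0 addr0.
  rewrite /twisted_t /= (sigma_linear0 phi_lin) (sigma_linear0 (sigma_linear_t C)).
  by rewrite addr0.
by rewrite /twisted_sigma /= dtm_sigma0.
Qed.
Lemma twisted_snd_morph : is_morph (fun x : twisted_motive => x.2).
Proof. by split=> [c [a b] [a' b'] | [a b] | [a b]]. Qed.
Lemma twisted_inl_inj : injective (fun a : A => (a, 0) : twisted_motive).
Proof. by move=> a a' []. Qed.
Lemma twisted_snd_surj (c : C) : exists x : twisted_motive, x.2 = c.
Proof. by exists (0, c). Qed.
Lemma twisted_exact (x : twisted_motive) : x.2 = 0 <-> exists a, x = (a, 0).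
Proof. by case: x => a b /=; split=> [-> | [a' [_ ->]]]; first exists a. Qed.

Definition twisted_ext : ext C A :=
  Ext twisted_inl_morph twisted_snd_morph twisted_inl_inj twisted_snd_surj twisted_exact.

Definition twisted_splitting : sigma_splitting twisted_ext.
Proof.
apply: (@SigmaSplitting _ _ twisted_ext (fun c => (0, c)) (fun x => x.1)) => //.
- split=> [c x y | x] /=; first by congr pair => /=; rewrite scaler0 addr0.
  by rewrite /twisted_sigma /= dtm_sigma0.
- by case=> a b; congr pair => /=; rewrite ?addr0 ?add0r.
Defined.

Lemma twisted_cocycle c : cocycle twisted_splitting c = phi c.
Proof. by rewrite /cocycle /= (sigma_linear0 (sigma_linear_t A)) add0r. Qed.
End TwistedExtension.

(** * Extension classes as cocycles modulo coboundaries *)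

Lemma subrBBl (V : zmodType) (a b c : V) : (a - b) - (a - c) = c - b.
Proof. by rewrite opprB addrC addrA subrK. Qed.
Lemma subrBBr (V : zmodType) (a b c : V) : (a - c) - (b - c) = a - b.
Proof. by rewrite opprB addrA subrK. Qed.

Definition ext_class (C A : motive) (psi : C -> A) : Ext1 C A :=
  fun e => exists S : sigma_splitting e, coboundary (fun c => cocycle S c - psi c).

Lemma Ext1_eq (C A : motive) (X Y : Ext1 C A) : (forall e, X e <-> Y e) -> X = Y.
Proof.
by move=> XY; apply: functional_extensionality => e; apply: propositional_extensionality.
Qed.

Section ExtClass.
Variables (C A : motive).

Lemma ext_equiv_iff (e e' : ext C A) (S : sigma_splitting e) (S' : sigma_splitting e') :
  ext_equiv e e' <-> coboundary (fun c => cocycle S c - cocycle S' c).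
Proof. exact (ext_morph_iff_coboundary S S' (morph_id A) (morph_id C)). Qed.

Lemma cocycle_unique (e : ext C A) (S1 S2 : sigma_splitting e) :
  coboundary (fun c => cocycle S1 c - cocycle S2 c).
Proof. by apply/(ext_equiv_iff S1 S2); exists id; split=> //; exact: morph_id. Qed.

Lemma ext_classE (psi : C -> A) (e : ext C A) (S : sigma_splitting e) :
  ext_class psi e <-> coboundary (fun c => cocycle S c - psi c).
Proof.
split=> [[S' hS'] | ]; last by exists S.
by apply: coboundary_eq (coboundaryD (cocycle_unique S S') hS') => c; rewrite addrA subrK.
Qed.

Lemma ext_class_twisted (psi : C -> A) (psi_lin : sigma_linear psi) :
  ext_class psi (twisted_ext psi_lin).
Proof.
exists (twisted_splitting psi_lin).
by apply: coboundary_eq (coboundary0 C A) => c; rewrite twisted_cocycle subrr.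
Qed.

Lemma ext_class_eq (psi1 psi2 : C -> A) :
  coboundary (fun c => psi1 c - psi2 c) -> ext_class psi1 = ext_class psi2.
Proof.
move=> h; apply: Ext1_eq => e; split=> -[S hS]; exists S.
  by apply: coboundary_eq (coboundaryD hS h) => c; rewrite addrA subrK.
by apply: coboundary_eq (coboundaryB hS h) => c; rewrite opprB addrA subrK.
Qed.

Lemma ext_class_inj (psi1 psi2 : C -> A) : sigma_linear psi1 ->
  ext_class psi1 = ext_class psi2 -> coboundary (fun c => psi1 c - psi2 c).
Proof.
move=> psi1_lin E; have [S h1] := ext_class_twisted psi1_lin.
have /(ext_classE _ S) h2 : ext_class psi2 (twisted_ext psi1_lin).
  by rewrite -E; exact: ext_class_twisted.
by apply: coboundary_eq (coboundaryB h2 h1) => c; rewrite subrBBl.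
Qed.

Lemma is_classP (X : Ext1 C A) :
  is_class X <-> exists psi : C -> A, sigma_linear psi /\ X = ext_class psi.
Proof.
split=> [[e he] | [psi [psi_lin ->]]].
  have [S] := sigma_splitting_exists e.
  exists (cocycle S); split; first exact: cocycle_sigma_linear.
  apply: Ext1_eq => e'; have [S'] := sigma_splitting_exists e'.
  rewrite he (ext_classE _ S') (ext_equiv_iff S S').
  by split=> /coboundaryN; apply: coboundary_eq => c; rewrite opprB.
exists (twisted_ext psi_lin) => e'; have [S'] := sigma_splitting_exists e'.
have [S hS] := ext_class_twisted psi_lin.
rewrite (ext_equiv_iff S S') (ext_classE _ S').
by split=> h; apply: coboundary_eq (coboundaryB hS h) => c; rewrite ?subrBBl ?subrBBr.
Qed.

Lemma ext_class_is_class (psi : C -> A) : sigma_linear psi -> is_class (ext_class psi).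
Proof. by move=> psi_lin; apply/is_classP; exists psi. Qed.

Lemma ext_splitP (e : ext C A) (S : sigma_splitting e) :
  ext_split e <-> coboundary (cocycle S).
Proof.
split=> [[s [hs ps]] | [f [hf hfe]]].
  have s_lin := morph_sigma_linear hs.
  exists (fun c => - retr S (s c)); split=> [|c].
    exact/sigma_linear_opp/(sigma_linear_comp (retr_sigma_linear S) s_lin).
  have rst : retr S (s (dtm_t c)) = dtm_t (retr S (s c)) + cocycle S c.
    by rewrite (morph_tC hs) retr_t ps.
  by rewrite (sigma_linearN (sigma_linear_t A)) opprK rst addKr.
exists (fun c => sect S c - ext_i e (f c)); split=> [|c]; last first.
  by rewrite (sigma_linearB (ext_p_sigma_linear e)) ext_p_sect ext_p_i subr0.
apply/is_morphP; split=> [|c].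
  exact: sigma_linear_sub (sect_sigma_linear S) (sigma_linear_comp (ext_i_sigma_linear e) hf).
rewrite (sigma_linearB (sigma_linear_t _)) t_sect -ext_i_t hfe.
by rewrite (sigma_linearB (ext_i_sigma_linear e)) [RHS]addrC [RHS]addrA addKr addrC.
Qed.

Lemma ext_is_zero_class (psi : C -> A) : sigma_linear psi ->
  ext_is_zero (ext_class psi) <-> coboundary psi.
Proof.
move=> psi_lin; split=> [[e [[S hS] /(ext_splitP S) hsplit]] | h].
  by apply: coboundary_eq (coboundaryB hsplit hS) => c; rewrite opprB addrC subrK.
exists (twisted_ext psi_lin); split; first exact: ext_class_twisted.
have [S hS] := ext_class_twisted psi_lin; apply/(ext_splitP S).
by apply: coboundary_eq (coboundaryD hS h) => c; rewrite subrK.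
Qed.
End ExtClass.

Section Functoriality.
Variables (C A : motive).

Lemma push_rel_iff (B : motive) (g : A -> B) (e : ext C A) (e' : ext C B)
    (S : sigma_splitting e) (S' : sigma_splitting e') : is_morph g ->
  push_rel g e e' <-> coboundary (fun c => g (cocycle S c) - cocycle S' c).
Proof. by move=> hg; exact (ext_morph_iff_coboundary S S' hg (morph_id C)). Qed.

Lemma pull_rel_iff (C' : motive) (h : C' -> C) (e : ext C A) (e' : ext C' A)
    (S : sigma_splitting e) (S' : sigma_splitting e') : is_morph h ->
  pull_rel h e e' <-> coboundary (fun c => cocycle S' c - cocycle S (h c)).
Proof. by move=> hh; exact (ext_morph_iff_coboundary S' S (morph_id A) hh). Qed.

Lemma push_map_class (B : motive) (g : A -> B) (psi : C -> A) :
  is_morph g -> sigma_linear psi -> push_map g (ext_class psi) = ext_class (g \o psi).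
Proof.
move=> hg psi_lin; have g_lin := morph_sigma_linear hg.
apply: Ext1_eq => e'; have [S'] := sigma_splitting_exists e'; rewrite (ext_classE _ S').
split=> [[e [[S he] /(push_rel_iff S S' hg) hpush]] | h].
  apply: coboundary_eq (coboundaryB (coboundary_compl hg he) hpush) => c.
  by rewrite (sigma_linearB g_lin) subrBBl.
exists (twisted_ext psi_lin); split; first exact: ext_class_twisted.
have [S hS] := ext_class_twisted psi_lin; apply/(push_rel_iff S S' hg).
apply: coboundary_eq (coboundaryB (coboundary_compl hg hS) h) => c.
by rewrite (sigma_linearB g_lin) subrBBr.
Qed.

Lemma pull_map_class (C' : motive) (h : C' -> C) (psi : C -> A) :
  is_morph h -> sigma_linear psi -> pull_map h (ext_class psi) = ext_class (psi \o h).
Proof.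
move=> hh psi_lin.
apply: Ext1_eq => e'; have [S'] := sigma_splitting_exists e'; rewrite (ext_classE _ S').
split=> [[e [[S he] /(pull_rel_iff S S' hh) hpull]] | h'].
  apply: coboundary_eq (coboundaryD hpull (coboundary_compr hh he)) => c.
  by rewrite addrA subrK.
exists (twisted_ext psi_lin); split; first exact: ext_class_twisted.
have [S hS] := ext_class_twisted psi_lin; apply/(pull_rel_iff S S' hh).
by apply: coboundary_eq (coboundaryB h' (coboundary_compr hh hS)) => c; rewrite subrBBr.
Qed.

Section BaerSum.
Variables (e1 e2 e : ext C A).
Variables (S1 : sigma_splitting e1) (S2 : sigma_splitting e2) (S : sigma_splitting e).

Lemma baer_rel_coboundary :
  baer_rel e1 e2 e -> coboundary (fun c => cocycle S1 c + cocycle S2 c - cocycle S c).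
Proof.
case=> Phi /= [Phi_lin Phi_t Phi_sigma Phi_i Phi_p].
have compat_sect c : ext_p e1 (sect S1 c) = ext_p e2 (sect S2 c) by rewrite !ext_p_sect.
have compat_i a b : ext_p e1 (ext_i e1 a) = ext_p e2 (ext_i e2 b) by rewrite !ext_p_i.
exists (fun c => retr S (Phi (sect S1 c) (sect S2 c))); split=> [|c].
  split=> [a c c' | c].
    rewrite (sect_sigma_linear S1).1 (sect_sigma_linear S2).1 Phi_lin //.
    exact: (retr_sigma_linear S).1.
  rewrite (sigma_linearS (sect_sigma_linear S1)) (sigma_linearS (sect_sigma_linear S2)).
  by rewrite Phi_sigma // (sigma_linearS (retr_sigma_linear S)).
have E1 : retr S (Phi (dtm_t (sect S1 c)) (dtm_t (sect S2 c))) =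
          dtm_t (retr S (Phi (sect S1 c) (sect S2 c))) + cocycle S c.
  by rewrite Phi_t // retr_t Phi_p // ext_p_sect.
have E2 : retr S (Phi (dtm_t (sect S1 c)) (dtm_t (sect S2 c))) =
          cocycle S1 c + cocycle S2 c + retr S (Phi (sect S1 (dtm_t c)) (sect S2 (dtm_t c))).
  have := Phi_lin 1 _ _ _ _ (compat_i (cocycle S1 c) (cocycle S2 c)) (compat_sect (dtm_t c)).
  rewrite !scale1r !t_sect => ->.
  by rewrite Phi_i (sigma_linearD (retr_sigma_linear S)) retr_ext_i.
by apply/eqP; rewrite subr_eq addrAC eq_sym subr_eq -E1 E2.
Qed.

Lemma coboundary_baer_rel :
  coboundary (fun c => cocycle S1 c + cocycle S2 c - cocycle S c) -> baer_rel e1 e2 e.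
Proof.
case=> f [f_lin hf].
have cocycle_rel c : cocycle S1 c + cocycle S2 c + f (dtm_t c) = dtm_t (f c) + cocycle S c.
  by rewrite -[_ + cocycle S2 c](subrK (cocycle S c)) hf addrAC subrK.
have r1_lin := retr_sigma_linear S1; have r2_lin := retr_sigma_linear S2.
have p1_lin := ext_p_sigma_linear e1; have s_lin := sect_sigma_linear S.
have i_lin := ext_i_sigma_linear e.
exists (fun x1 x2 => ext_i e (retr S1 x1 + retr S2 x2 + f (ext_p e1 x1)) + sect S (ext_p e1 x1)).
split=> [a x1 x2 y1 y2 _ _ | x1 x2 compat | x1 x2 _ | m1 m2 | x1 x2 _].
- rewrite r1_lin.1 r2_lin.1 p1_lin.1 f_lin.1 s_lin.1.
  rewrite (addrACA (a *: _)) (addrACA (a *: _ + a *: _)) -!scalerDr.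
  by rewrite i_lin.1 addrACA -scalerDr.
- rewrite !retr_t ext_p_t -compat (addrACA (dtm_t (retr S1 x1))).
  rewrite -(addrA (dtm_t (retr S1 x1) + _)) cocycle_rel.
  rewrite dtm_tD -ext_i_t t_sect [RHS]addrA -(sigma_linearD i_lin) !dtm_tD.
  by rewrite !addrA.
- rewrite (sigma_linearS r1_lin) (sigma_linearS r2_lin) (sigma_linearS p1_lin).
  rewrite (sigma_linearS f_lin) -!dtm_sigma_add (sigma_linearS i_lin).
  by rewrite (sigma_linearS s_lin) dtm_sigma_add.
- rewrite !retr_ext_i ext_p_i (sigma_linear0 f_lin) (sigma_linear0 s_lin).
  by rewrite !addr0.
- by rewrite (sigma_linearD (ext_p_sigma_linear e)) ext_p_i ext_p_sect add0r.
Qed.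
End BaerSum.

Lemma ext_add_class (psi1 psi2 : C -> A) : sigma_linear psi1 -> sigma_linear psi2 ->
  ext_add (ext_class psi1) (ext_class psi2) = ext_class (fun c => psi1 c + psi2 c).
Proof.
move=> psi1_lin psi2_lin.
apply: Ext1_eq => e; have [S] := sigma_splitting_exists e; rewrite (ext_classE _ S).
split=> [[e1 [e2 [[S1 he1] [S2 he2] /(@baer_rel_coboundary _ _ _ S1 S2 S) hb]]] | h].
  apply: coboundary_eq (coboundaryB (coboundaryD he1 he2) hb) => c.
  by rewrite addrACA -opprD subrBBl.
exists (twisted_ext psi1_lin), (twisted_ext psi2_lin).
have [S1 he1] := ext_class_twisted psi1_lin; have [S2 he2] := ext_class_twisted psi2_lin.
split; [exists S1 | exists S2 | apply: (@coboundary_baer_rel _ _ _ S1 S2 S)] => //.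
apply: coboundary_eq (coboundaryB (coboundaryD he1 he2) h) => c.
by rewrite addrACA -opprD subrBBr.
Qed.

Lemma ext_scale_class a (psi : C -> A) : sigma_linear psi ->
  ext_scale iota0 a (ext_class psi) = ext_class (fun c => tact iota0 a (psi c)).
Proof. exact: push_map_class (tact_morph A a). Qed.
End Functoriality.

Section ConnectingMaps.
Variables (M1 M2 : motive) (E : ext M2 M1) (SE : sigma_splitting E) (N : motive).

Lemma delta_cov_class (h : N -> M2) :
  is_morph h -> delta_cov E h = ext_class (cocycle SE \o h).
Proof.
move=> hh; apply: Ext1_eq => e; have [S] := sigma_splitting_exists e.
by rewrite (ext_classE _ S) /delta_cov (pull_rel_iff SE S hh).
Qed.

Lemma delta_contra_class (k : M1 -> N) :
  is_morph k -> delta_contra E k = ext_class (k \o cocycle SE).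
Proof.
move=> hk; apply: Ext1_eq => e; have [S] := sigma_splitting_exists e.
rewrite (ext_classE _ S) /delta_contra (push_rel_iff SE S hk).
by split=> /coboundaryN; apply: coboundary_eq => c; rewrite opprB.
Qed.
End ConnectingMaps.

Section Linearity.
Variables (A B B' : motive) (g : B -> B').
Hypothesis hg : is_morph g.

Lemma postcomp_hom_add (f1 f2 : A -> B) : g \o hom_add f1 f2 = hom_add (g \o f1) (g \o f2).
Proof.
apply: functional_extensionality => x.
by rewrite /= /hom_add (sigma_linearD (morph_sigma_linear hg)).
Qed.
Lemma postcomp_hom_scale a (f : A -> B) :
  g \o hom_scale iota0 a f = hom_scale iota0 a (g \o f).
Proof. by apply: functional_extensionality => x; rewrite /= /hom_scale (tact_natural a hg). Qed.

Lemma push_map_add (C1 C2 : Ext1 A B) : is_class C1 -> is_class C2 ->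
  push_map g (ext_add C1 C2) = ext_add (push_map g C1) (push_map g C2).
Proof.
have g_lin := morph_sigma_linear hg.
move=> /is_classP [psi1 [psi1_lin ->]] /is_classP [psi2 [psi2_lin ->]].
rewrite ext_add_class // !push_map_class //; last exact: sigma_linear_add.
rewrite ext_add_class; try exact: sigma_linear_comp g_lin _.
by congr ext_class; apply: functional_extensionality => c; rewrite /= (sigma_linearD g_lin).
Qed.
Lemma push_map_scale a (C : Ext1 A B) :
  is_class C -> push_map g (ext_scale iota0 a C) = ext_scale iota0 a (push_map g C).
Proof.
move=> /is_classP [psi [psi_lin ->]]; have tact_lin := morph_sigma_linear (tact_morph B a).
rewrite ext_scale_class // !push_map_class //; last exact: sigma_linear_comp tact_lin psi_lin.
rewrite ext_scale_class; last exact: sigma_linear_comp (morph_sigma_linear hg) psi_lin.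
by congr ext_class; apply: functional_extensionality => c; rewrite /= (tact_natural a hg).
Qed.
End Linearity.

Section PullbackLinearity.
Variables (N N' A : motive) (h : N' -> N).
Hypothesis hh : is_morph h.

Lemma pull_map_add (C1 C2 : Ext1 N A) : is_class C1 -> is_class C2 ->
  pull_map h (ext_add C1 C2) = ext_add (pull_map h C1) (pull_map h C2).
Proof.
have h_lin := morph_sigma_linear hh.
move=> /is_classP [psi1 [psi1_lin ->]] /is_classP [psi2 [psi2_lin ->]].
rewrite ext_add_class // !pull_map_class //; last exact: sigma_linear_add.
by rewrite ext_add_class //; exact: sigma_linear_comp _ h_lin.
Qed.
Lemma pull_map_scale a (C : Ext1 N A) :
  is_class C -> pull_map h (ext_scale iota0 a C) = ext_scale iota0 a (pull_map h C).
Proof.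
move=> /is_classP [psi [psi_lin ->]]; have tact_lin := morph_sigma_linear (tact_morph A a).
rewrite ext_scale_class // !pull_map_class //; last exact: sigma_linear_comp tact_lin psi_lin.
by rewrite ext_scale_class //; exact: sigma_linear_comp psi_lin (morph_sigma_linear hh).
Qed.
End PullbackLinearity.

Section ConnectingMapLinearity.
Variables (M1 M2 : motive) (E : ext M2 M1) (N : motive).

Lemma delta_cov_add (h1 h2 : N -> M2) : is_morph h1 -> is_morph h2 ->
  delta_cov E (hom_add h1 h2) = ext_add (delta_cov E h1) (delta_cov E h2).
Proof.
move=> hh1 hh2; have [SE] := sigma_splitting_exists E; have phi_lin := cocycle_sigma_linear SE.
rewrite !(delta_cov_class SE) //; last exact: morph_hom_add.
rewrite ext_add_class; try exact: sigma_linear_comp phi_lin (morph_sigma_linear _).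
congr ext_class; apply: functional_extensionality => c.
by rewrite /= /hom_add (sigma_linearD phi_lin).
Qed.
(* The cocycle does not commute with [t]; it does so up to a coboundary. *)
Lemma delta_cov_scale a (h : N -> M2) :
  is_morph h -> delta_cov E (hom_scale iota0 a h) = ext_scale iota0 a (delta_cov E h).
Proof.
move=> hh; have [SE] := sigma_splitting_exists E.
have phih_lin := sigma_linear_comp (cocycle_sigma_linear SE) (morph_sigma_linear hh).
rewrite !(delta_cov_class SE) //; last exact: morph_hom_scale.
rewrite ext_scale_class //; apply: ext_class_eq.
apply: coboundary_eq (coboundary_tact a phih_lin) => c.
by rewrite /= /hom_scale (tact_natural a hh).
Qed.

Lemma delta_contra_add (k1 k2 : M1 -> N) : is_morph k1 -> is_morph k2 ->
  delta_contra E (hom_add k1 k2) = ext_add (delta_contra E k1) (delta_contra E k2).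
Proof.
move=> hk1 hk2; have [SE] := sigma_splitting_exists E; have phi_lin := cocycle_sigma_linear SE.
rewrite !(delta_contra_class SE) //; last exact: morph_hom_add.
by rewrite ext_add_class //; exact: sigma_linear_comp (morph_sigma_linear _) phi_lin.
Qed.
Lemma delta_contra_scale a (k : M1 -> N) :
  is_morph k -> delta_contra E (hom_scale iota0 a k) = ext_scale iota0 a (delta_contra E k).
Proof.
move=> hk; have [SE] := sigma_splitting_exists E; have phi_lin := cocycle_sigma_linear SE.
rewrite !(delta_contra_class SE) //; last exact: morph_hom_scale.
by rewrite ext_scale_class //; exact: sigma_linear_comp (morph_sigma_linear hk) phi_lin.
Qed.
End ConnectingMapLinearity.

(** * Exactness *)

Section Exactness.
Variables (M1 M2 : motive) (E : ext M2 M1) (N : motive).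
Local Notation M := (ext_mid E).
Local Notation i := (ext_i E).
Local Notation p := (ext_p E).

Lemma ext_i_retr (S : sigma_splitting E) (x : M) : p x = 0 -> i (retr S x) = x.
Proof.
by move=> px; rewrite {2}(ext_decomp S x) px (sigma_linear0 (sect_sigma_linear S)) addr0.
Qed.

Lemma cov_exact_Hom_M (g : N -> M) : is_morph g ->
  p \o g = (fun _ => 0) <-> exists f : N -> M1, is_morph f /\ g = i \o f.
Proof.
move=> hg; have [S] := sigma_splitting_exists E.
split=> [pg0 | [f [hf ->]]]; last by apply: functional_extensionality => x; exact: ext_p_i.
have pg x : p (g x) = 0 := equal_f pg0 x.
exists (retr S \o g); split.
  apply/is_morphP; split=> [|x /=].
    exact: sigma_linear_comp (retr_sigma_linear S) (morph_sigma_linear hg).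
  by rewrite (morph_tC hg) retr_t pg (sigma_linear0 (cocycle_sigma_linear S)) addr0.
by apply: functional_extensionality => x /=; rewrite ext_i_retr.
Qed.

Lemma cov_exact_Hom_M2 (h : N -> M2) : is_morph h ->
  ext_is_zero (delta_cov E h) <-> exists g : N -> M, is_morph g /\ h = p \o g.
Proof.
move=> hh; have [S] := sigma_splitting_exists E; have i_lin := ext_i_sigma_linear E.
have phih_lin := sigma_linear_comp (cocycle_sigma_linear S) (morph_sigma_linear hh).
rewrite (delta_cov_class S hh) (ext_is_zero_class phih_lin).
split=> [[f [hf hfe]] | [g [hg ->]]].
  exists (fun c => sect S (h c) - i (f c)); split.
    apply/is_morphP; split=> [|c].
      apply: sigma_linear_sub (sigma_linear_comp i_lin hf).
      exact: sigma_linear_comp (sect_sigma_linear S) (morph_sigma_linear hh).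
    rewrite (morph_tC hh) (sigma_linearB (sigma_linear_t _)) t_sect -ext_i_t.
    move: (hfe c) => /= ->.
    by rewrite (sigma_linearB i_lin) [RHS]addrC [RHS]addrA addKr addrC.
  apply: functional_extensionality => c /=.
  by rewrite (sigma_linearB (ext_p_sigma_linear E)) ext_p_sect ext_p_i subr0.
exists (fun c => - retr S (g c)); split=> [|c /=].
  exact/sigma_linear_opp/(sigma_linear_comp (retr_sigma_linear S) (morph_sigma_linear hg)).
by rewrite (sigma_linearN (sigma_linear_t M1)) opprK (morph_tC hg) retr_t addKr.
Qed.

Lemma cov_exact_Ext_M1 (C : Ext1 N M1) : is_class C ->
  ext_is_zero (push_map i C) <-> exists h : N -> M2, is_morph h /\ C = delta_cov E h.
Proof.
move=> /is_classP [psi [psi_lin ->]]; have [S] := sigma_splitting_exists E.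
have i_lin := ext_i_sigma_linear E; have p_lin := ext_p_sigma_linear E.
rewrite (push_map_class (ext_i_morph E) psi_lin).
rewrite (ext_is_zero_class (sigma_linear_comp i_lin psi_lin)).
split=> [[F [hF hFe]] | [h [hh]]].
  have pFt c : p (F (dtm_t c)) = dtm_t (p (F c)).
    apply/eqP; rewrite -subr_eq0 -ext_p_t -(sigma_linearB p_lin).
    by rewrite -opprB -hFe (sigma_linearN p_lin) /= ext_p_i oppr0.
  have hpF : is_morph (p \o F).
    by apply/is_morphP; split; [exact: sigma_linear_comp p_lin hF | exact: pFt].
  exists (p \o F); split=> //; rewrite (delta_cov_class S hpF); apply: ext_class_eq.
  exists (retr S \o F); split=> [|c]; first exact: sigma_linear_comp (retr_sigma_linear S) hF.
  rewrite -[psi c](retr_ext_i S); move: (hFe c) => /= ->.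
  by rewrite (sigma_linearB (retr_sigma_linear S)) retr_t addrAC addrK.
rewrite (delta_cov_class S hh) => /(ext_class_inj psi_lin) hpsi.
have t_sect_h : coboundary (fun c => i (cocycle S (h c))).
  exists (sect S \o h); split=> [|c /=].
    exact: sigma_linear_comp (sect_sigma_linear S) (morph_sigma_linear hh).
  by rewrite (morph_tC hh) t_sect addrK.
apply: coboundary_eq (coboundaryD (coboundary_compl (ext_i_morph E) hpsi) t_sect_h) => c.
by rewrite /= -(sigma_linearD i_lin) subrK.
Qed.

Lemma cov_exact_Ext_M (C : Ext1 N M) : is_class C ->
  ext_is_zero (push_map p C) <-> exists C' : Ext1 N M1, is_class C' /\ C = push_map i C'.
Proof.
move=> /is_classP [psi [psi_lin ->]]; have [S] := sigma_splitting_exists E.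
have p_lin := ext_p_sigma_linear E; have s_lin := sect_sigma_linear S.
rewrite (push_map_class (ext_p_morph E) psi_lin).
rewrite (ext_is_zero_class (sigma_linear_comp p_lin psi_lin)).
split=> [[F [hF hFe]] | [C' [/is_classP [psi' [psi'_lin ->]]]]].
  pose chi c := psi c - (dtm_t (sect S (F c)) - sect S (F (dtm_t c))).
  have chi_lin : sigma_linear chi.
    apply: sigma_linear_sub psi_lin (sigma_linear_sub _ _).
      exact: sigma_linear_comp (sigma_linear_t _) (sigma_linear_comp s_lin hF).
    exact: sigma_linear_comp s_lin (sigma_linear_comp hF (sigma_linear_t _)).
  have p_chi c : p (chi c) = 0.
    rewrite /chi !(sigma_linearB p_lin) ext_p_t !ext_p_sect.
    by move: (hFe c) => /= ->; rewrite subrr.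
  have r_chi_lin := sigma_linear_comp (retr_sigma_linear S) chi_lin.
  exists (ext_class (retr S \o chi)); split; first exact: ext_class_is_class.
  rewrite (push_map_class (ext_i_morph E) r_chi_lin); apply: ext_class_eq.
  exists (sect S \o F); split=> [|c]; first exact: sigma_linear_comp s_lin hF.
  by rewrite /= ext_i_retr // /chi opprB addrC subrK.
rewrite (push_map_class (ext_i_morph E) psi'_lin) => /(ext_class_inj psi_lin) hpsi.
apply: coboundary_eq (coboundary_compl (ext_p_morph E) hpsi) => c.
by rewrite /= (sigma_linearB p_lin) ext_p_i subr0.
Qed.

Lemma cov_Ext_surj (C : Ext1 N M2) : is_class C ->
  exists C' : Ext1 N M, is_class C' /\ push_map p C' = C.
Proof.
move=> /is_classP [psi [psi_lin ->]]; have [S] := sigma_splitting_exists E.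
have s_psi_lin := sigma_linear_comp (sect_sigma_linear S) psi_lin.
exists (ext_class (sect S \o psi)); split; first exact: ext_class_is_class.
rewrite (push_map_class (ext_p_morph E) s_psi_lin).
by congr ext_class; apply: functional_extensionality => c; rewrite /= ext_p_sect.
Qed.

Lemma contra_exact_Hom_M (g : M -> N) : is_morph g ->
  g \o i = (fun _ => 0) <-> exists f : M2 -> N, is_morph f /\ g = f \o p.
Proof.
move=> hg; have [S] := sigma_splitting_exists E; have g_lin := morph_sigma_linear hg.
split=> [gi0 | [f [hf ->]]]; last first.
  apply: functional_extensionality => a /=.
  by rewrite ext_p_i (sigma_linear0 (morph_sigma_linear hf)).
have gi a : g (i a) = 0 := equal_f gi0 a.
exists (g \o sect S); split.
  apply/is_morphP; split=> [|c /=]; first exact: sigma_linear_comp g_lin (sect_sigma_linear S).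
  by rewrite -(morph_tC hg) t_sect (sigma_linearD g_lin) gi add0r.
apply: functional_extensionality => x /=.
by rewrite {1}(ext_decomp S x) (sigma_linearD g_lin) gi add0r.
Qed.

Lemma contra_exact_Hom_M1 (k : M1 -> N) : is_morph k ->
  ext_is_zero (delta_contra E k) <-> exists g : M -> N, is_morph g /\ k = g \o i.
Proof.
move=> hk; have [S] := sigma_splitting_exists E; have k_lin := morph_sigma_linear hk.
have kphi_lin := sigma_linear_comp k_lin (cocycle_sigma_linear S).
rewrite (delta_contra_class S hk) (ext_is_zero_class kphi_lin).
split=> [[F [hF hFe]] | [g [hg ->]]].
  exists (fun x => k (retr S x) + F (p x)); split.
    apply/is_morphP; split=> [|x].
      apply: sigma_linear_add (sigma_linear_comp k_lin (retr_sigma_linear S)) _.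
      exact: sigma_linear_comp hF (ext_p_sigma_linear E).
    rewrite retr_t ext_p_t (sigma_linearD k_lin) (morph_tC hk) -addrA dtm_tD.
    by move: (hFe (p x)) => /= ->; rewrite subrK.
  by apply: functional_extensionality => a /=; rewrite retr_ext_i ext_p_i (sigma_linear0 hF) addr0.
have g_lin := morph_sigma_linear hg.
exists (g \o sect S); split=> [|c /=]; first exact: sigma_linear_comp g_lin (sect_sigma_linear S).
by rewrite -(morph_tC hg) -(sigma_linearB g_lin) t_sect addrK.
Qed.

Lemma contra_exact_Ext_M2 (C : Ext1 M2 N) : is_class C ->
  ext_is_zero (pull_map p C) <-> exists k : M1 -> N, is_morph k /\ C = delta_contra E k.
Proof.
move=> /is_classP [psi [psi_lin ->]]; have [S] := sigma_splitting_exists E.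
have p_lin := ext_p_sigma_linear E; have i_lin := ext_i_sigma_linear E.
rewrite (pull_map_class (ext_p_morph E) psi_lin).
rewrite (ext_is_zero_class (sigma_linear_comp psi_lin p_lin)).
split=> [[F [hF hFe]] | [k [hk]]].
  have hk : is_morph (fun a => - F (i a)).
    apply/is_morphP; split=> [|a]; first exact/sigma_linear_opp/(sigma_linear_comp hF i_lin).
    move: (hFe (i a)) => /=; rewrite ext_p_i (sigma_linear0 psi_lin) => /eqP.
    by rewrite eq_sym subr_eq0 ext_i_t (sigma_linearN (sigma_linear_t N)) => /eqP ->.
  exists (fun a => - F (i a)); split=> //; rewrite (delta_contra_class S hk).
  apply: ext_class_eq; exists (F \o sect S); split=> [|c /=].
    exact: sigma_linear_comp hF (sect_sigma_linear S).
  rewrite -{1}(ext_p_sect S c); move: (hFe (sect S c)) => /= ->.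
  by rewrite t_sect (sigma_linearD hF) opprK opprD addrA addrAC subrK.
rewrite (delta_contra_class S hk) => /(ext_class_inj psi_lin) hpsi.
have r_lin := retr_sigma_linear S; have k_lin := morph_sigma_linear hk.
have := coboundaryD (coboundary_compr (ext_p_morph E) hpsi)
                    (coboundary_commutator (sigma_linear_comp k_lin r_lin)).
apply: coboundary_eq => x /=.
by rewrite retr_t (sigma_linearD k_lin) (morph_tC hk) [dtm_t _ + _]addrC addrK subrK.
Qed.

Lemma contra_exact_Ext_M (C : Ext1 M N) : is_class C ->
  ext_is_zero (pull_map i C) <-> exists C' : Ext1 M2 N, is_class C' /\ C = pull_map p C'.
Proof.
move=> /is_classP [psi [psi_lin ->]]; have [S] := sigma_splitting_exists E.
have r_lin := retr_sigma_linear S; have s_lin := sect_sigma_linear S.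
rewrite (pull_map_class (ext_i_morph E) psi_lin).
rewrite (ext_is_zero_class (sigma_linear_comp psi_lin (ext_i_sigma_linear E))).
split=> [[F [hF hFe]] | [C' [/is_classP [psi' [psi'_lin ->]]]]].
  pose chi x := psi x - (dtm_t (F (retr S x)) - F (retr S (dtm_t x))).
  have chi_lin : sigma_linear chi.
    apply: sigma_linear_sub psi_lin (sigma_linear_sub _ _).
      exact: sigma_linear_comp (sigma_linear_t _) (sigma_linear_comp hF r_lin).
    exact: sigma_linear_comp hF (sigma_linear_comp r_lin (sigma_linear_t _)).
  have chi_i a : chi (i a) = 0.
    by rewrite /chi retr_ext_i -ext_i_t retr_ext_i; move: (hFe a) => /= ->; rewrite subrr.
  have chi_sect x : chi (sect S (p x)) = chi x.
    by rewrite {2}(ext_decomp S x) (sigma_linearD chi_lin) chi_i add0r.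
  exists (ext_class (chi \o sect S)); split.
    exact/ext_class_is_class/(sigma_linear_comp chi_lin s_lin).
  rewrite (pull_map_class (ext_p_morph E) (sigma_linear_comp chi_lin s_lin)).
  apply: ext_class_eq; exists (F \o retr S); split=> [|x /=].
    exact: sigma_linear_comp hF r_lin.
  by rewrite chi_sect /chi opprB addrC subrK.
rewrite (pull_map_class (ext_p_morph E) psi'_lin) => /(ext_class_inj psi_lin) hpsi.
apply: coboundary_eq (coboundary_compr (ext_i_morph E) hpsi) => a.
by rewrite /= ext_p_i (sigma_linear0 psi'_lin) subr0.
Qed.

Lemma contra_Ext_surj (C : Ext1 M1 N) : is_class C ->
  exists C' : Ext1 M N, is_class C' /\ pull_map i C' = C.
Proof.
move=> /is_classP [psi [psi_lin ->]]; have [S] := sigma_splitting_exists E.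
have psi_r_lin := sigma_linear_comp psi_lin (retr_sigma_linear S).
exists (ext_class (psi \o retr S)); split; first exact: ext_class_is_class.
rewrite (pull_map_class (ext_i_morph E) psi_r_lin).
by congr ext_class; apply: functional_extensionality => a; rewrite /= retr_ext_i.
Qed.
End Exactness.

Lemma long_exact_cov_holds (M1 M2 : motive) (E : ext M2 M1) (N : motive) :
  long_exact_cov iota0 E N.
Proof.
rewrite /long_exact_cov; cbv zeta; repeat match goal with |- _ /\ _ => split end.
- by move=> f g _ _; exact: postcomp_hom_add (ext_i_morph E) f g.
- by move=> a f _; exact: postcomp_hom_scale (ext_i_morph E) a f.
- by move=> f g _ _; exact: postcomp_hom_add (ext_p_morph E) f g.
- by move=> a f _; exact: postcomp_hom_scale (ext_p_morph E) a f.
- exact: delta_cov_add.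
- exact: delta_cov_scale.
- exact: push_map_add (ext_i_morph E).
- exact: push_map_scale (ext_i_morph E).
- exact: push_map_add (ext_p_morph E).
- exact: push_map_scale (ext_p_morph E).
- move=> f g _ _ ifg; apply: functional_extensionality => x.
  exact: ext_i_inj (equal_f ifg x).
- exact: cov_exact_Hom_M.
- exact: cov_exact_Hom_M2.
- exact: cov_exact_Ext_M1.
- exact: cov_exact_Ext_M.
- exact: cov_Ext_surj.
Qed.

Lemma long_exact_contra_holds (M1 M2 : motive) (E : ext M2 M1) (N : motive) :
  long_exact_contra iota0 E N.
Proof.
rewrite /long_exact_contra; cbv zeta; repeat match goal with |- _ /\ _ => split end.
1-4: by [].
- exact: delta_contra_add.
- exact: delta_contra_scale.
- exact: pull_map_add (ext_p_morph E).
- exact: pull_map_scale (ext_p_morph E).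
- exact: pull_map_add (ext_i_morph E).
- exact: pull_map_scale (ext_i_morph E).
- move=> f g _ _ fpg; apply: functional_extensionality => y.
  by have [x <-] := ext_p_surj E y; exact: equal_f fpg x.
- exact: contra_exact_Hom_M.
- exact: contra_exact_Hom_M1.
- exact: contra_exact_Ext_M2.
- exact: contra_exact_Ext_M.
- exact: contra_Ext_surj.
Qed.
End Development.

Theorem theorem11p5 (Fq : finFieldType) (K : fieldType)
    (iota0 : {rmorphism Fq -> K}) (theta : K) (hK : perfect K)
    (M1 M2 : dtm Fq theta) (E : ext M2 M1) (N : dtm Fq theta) :
  long_exact_cov iota0 E N /\ long_exact_contra iota0 E N.
Proof. by split; [exact: long_exact_cov_holds | exact: long_exact_contra_holds]. Qed.
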